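(* Let $N\ge1$, $K\ge2$ be integers and let $\alpha\ge\frac{2(K-1)}{K}$. Then for every pure strategy $s\in S$, the profile $(s,s)$ is a Nash equilibrium of $\mathcal{B}_\alpha(N,K)$.
   Context: Fix integers $N\ge1$, $K\ge2$ and a real number $\alpha$. The Colonel Blotto game $\mathcal{B}_\alpha(N,K)$ is the two-player simultaneous-move game with players $A,B$, each with pure strategy set $S=\{s\in\{0,1,\ldots,N\}^K:\sum_{k=1}^K s_k=N\}$, in which the payoff of player $i$ at the pure profile $(s^i,s^{-i})$ is $\pi^i(s^i,s^{-i})=\sum_{k=1}^K\big(\mathbf 1[s^i_k>s^{-i}_k]+\tfrac{\alpha}{2}\mathbf 1[s^i_k=s^{-i}_k]\big)$. Mixed strategies are probability distributions on $S$, with expected payoffs under independent randomization; a Nash equilibrium is a mixed profile from which no unilateral deviation raises a player's expected payoff. *)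

From mathcomp Require Import all_boot all_order all_algebra.
Set Implicit Arguments. Unset Strict Implicit. Unset Printing Implicit Defensive.
Import Order.TTheory GRing.Theory Num.Theory.
Local Open Scope ring_scope.

(* Colonel Blotto game B_alpha(N,K). A pure strategy is an allocation
   s : 'I_K -> {0..N} of N soldiers to K battlefields (sum = N). *)
Definition alloc (N K : nat) := {ffun 'I_K -> 'I_N.+1}.

Definition is_strategy (N K : nat) (s : alloc N K) : bool :=
  (\sum_(k < K) (s k : nat) == N)%N.

Definition payoff (R : numDomainType) (N K : nat) (alpha : R)
  (s t : alloc N K) : R :=
  \sum_(k < K) ((((t k : nat) < s k)%N)%:R
                 + alpha / 2%:R * (((s k : nat) == t k))%:R).

Definition is_mixed (R : numDomainType) (N K : nat) (p : {ffun alloc N K -> R}) : Prop :=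
  (forall s, 0 <= p s) /\ (forall s, ~~ is_strategy s -> p s = 0) /\
  \sum_s p s = 1.

Definition exp_payoff (R : numDomainType) (N K : nat) (alpha : R)
  (p q : {ffun alloc N K -> R}) : R :=
  \sum_s \sum_t p s * q t * payoff alpha s t.

(* (pA, pB) is a Nash equilibrium: no unilateral (mixed) deviation raises
   the deviator's expected payoff. The game is symmetric, so player B's
   payoff at (pA,pB) is exp_payoff alpha pB pA. *)
Definition nash_eq (R : numDomainType) (N K : nat) (alpha : R)
  (pA pB : {ffun alloc N K -> R}) : Prop :=
  is_mixed pA /\ is_mixed pB /\
  (forall p, is_mixed p -> exp_payoff alpha p pB <= exp_payoff alpha pA pB) /\
  (forall p, is_mixed p -> exp_payoff alpha p pA <= exp_payoff alpha pB pA).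

Definition pure (R : numDomainType) (N K : nat) (s : alloc N K) : {ffun alloc N K -> R} :=
  [ffun t => ((t == s))%:R].

From mathcomp Require Import all_boot all_order all_algebra.
From mathcomp Require Import zify lra.
Import Order.TTheory GRing.Theory Num.Theory.
Local Open Scope ring_scope.

(* Against s, a deviation t winning w battlefields, losing l and tying the
   rest earns w + (alpha/2)(K - w - l), while s itself earns (alpha/2) K.
   Both allocations spend N soldiers, so if t wins somewhere it loses
   somewhere: l >= 1, hence w <= K - 1 <= (K - 1) l, and this is exactly
   what alpha/2 >= (K - 1)/K needs to give w <= (alpha/2)(w + l).  Mixed
   deviations against a pure strategy are averages of pure ones. *)

Lemma sum_nat_bool_gt0 (I : finType) (P : pred I) :
  (0 < \sum_i (P i : nat))%N = [exists i, P i].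
Proof.
rewrite lt0n sum_nat_eq0 negb_forall.
by apply: eq_existsb => i; case: (P i).
Qed.

Lemma count_ltn_gt0_swap (I : finType) (f g : I -> nat) :
  (\sum_i f i = \sum_i g i)%N ->
  (0 < \sum_i (f i < g i : nat))%N -> (0 < \sum_i (g i < f i : nat))%N.
Proof.
rewrite !sum_nat_bool_gt0 => Efg /existsP [i lt_fg]; apply: contraT.
rewrite negb_exists => /forallP /= le_fg.
have {}le_fg j : (f j <= g j)%N by rewrite leqNgt; apply: le_fg.
have : (\sum_j (g j - f j) = 0)%N by rewrite sumnB // Efg subnn.
move/eqP; rewrite sum_nat_eq0 => /forallP /(_ i) /=.
by rewrite subn_eq0 leqNgt lt_fg.
Qed.

Section Battlefields.

Context {N K : nat}.
Implicit Types s t : alloc N K.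

Definition wins s t : nat := \sum_(k < K) ((t k : nat) < s k).
Definition ties s t : nat := \sum_(k < K) ((s k : nat) == t k).

Lemma wins_wins_ties s t : (wins s t + wins t s + ties s t)%N = K.
Proof.
rewrite -!big_split /= -[RHS]card_ord -sum1_card.
by apply: eq_bigr => k _; case: ltngtP.
Qed.

Lemma wins_id s : wins s s = 0%N.
Proof. by apply: big1 => k _; rewrite ltnn. Qed.

Lemma ties_id s : ties s s = K.
Proof.
by rewrite -[RHS]card_ord -sum1_card; apply: eq_bigr => k _; rewrite eqxx.
Qed.

Lemma wins_gt0_swap s t : is_strategy s -> is_strategy t ->
  (0 < wins s t)%N -> (0 < wins t s)%N.
Proof. by move=> /eqP Es /eqP Et; apply: count_ltn_gt0_swap; rewrite Es Et. Qed.

Lemma payoffE (R : numDomainType) (alpha : R) s t :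
  payoff alpha s t = (wins s t)%:R + alpha / 2%:R * (ties s t)%:R.
Proof. by rewrite /payoff big_split /= !natr_sum mulr_sumr. Qed.

End Battlefields.

Lemma wins_le_share (R : realFieldType) (K w l : nat) (alpha : R) :
  (0 < K)%N -> 2%:R * (K%:R - 1) / K%:R <= alpha ->
  (w + l <= K)%N -> ((0 < w) -> (0 < l))%N ->
  w%:R <= alpha / 2%:R * (w + l)%:R.
Proof.
move=> K_gt0 le_alpha le_wlK w_l.
have K_posR : (0 : R) < K%:R by rewrite ltr0n.
have {le_alpha} le_share : K%:R - 1 <= alpha / 2%:R * K%:R.
  by rewrite mulrAC ler_pdivlMr ?ltr0n // mulrC -ler_pdivrMr.
have share_ge0 : 0 <= alpha / 2%:R.
  by rewrite -(pmulr_lge0 _ K_posR); apply: le_trans le_share; rewrite subr_ge0 ler1n.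
have [->|w_gt0] := posnP w; first by rewrite add0n mulr_ge0.
have l_gt0 := w_l w_gt0.
have w_le : (w%:R : R) <= (K%:R - 1) * l%:R.
  rewrite -[1]/(1%:R) -natrB // -natrM ler_nat subn1.
  by apply: leq_trans (leq_pmulr _ l_gt0); lia.
rewrite natrD -(ler_pM2l K_posR).
have l_ge0 : (0 : R) <= l%:R := ler0n _ _.
have w_ge0 : (0 : R) <= w%:R := ler0n _ _.
nra.
Qed.

Lemma payoff_deviation_le (R : realFieldType) (N K : nat) (alpha : R)
    (s t : alloc N K) :
  (0 < K)%N -> 2%:R * (K%:R - 1) / K%:R <= alpha ->
  is_strategy s -> is_strategy t ->
  payoff alpha t s <= payoff alpha s s.
Proof.
move=> K_gt0 le_alpha Ss St.
rewrite !payoffE wins_id ties_id add0r.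
rewrite -[X in _ <= _ * X%:R](wins_wins_ties t s) !natrD mulrDr.
rewrite lerD2r -natrD; apply: (@wins_le_share _ K) => //.
  by rewrite -[X in (_ <= X)%N](wins_wins_ties t s) leq_addr.
exact: wins_gt0_swap.
Qed.

Lemma is_mixed_pure (R : numDomainType) (N K : nat) (s : alloc N K) :
  is_strategy s -> is_mixed (pure R s).
Proof.
move=> Ss; split; [|split].
- by move=> t; rewrite ffunE ler0n.
- by move=> t; apply: contraNeq; rewrite ffunE pnatr_eq0 eqb0 negbK => /eqP ->.
- by rewrite (bigD1 s) //= big1 ?addr0 => [|t /negbTE]; rewrite ffunE ?eqxx // => ->.
Qed.

Lemma exp_payoff_pure (R : numDomainType) (N K : nat) (alpha : R)
    (p : {ffun alloc N K -> R}) (s : alloc N K) :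
  exp_payoff alpha p (pure R s) = \sum_t p t * payoff alpha t s.
Proof.
apply: eq_bigr => t _.
rewrite (bigD1 s) //= big1 ?addr0 => [|u /negbTE]; rewrite ffunE ?eqxx ?mulr1 //.
by move=> ->; rewrite mulr0 mul0r.
Qed.

Lemma pure_best_response (R : numDomainType) (N K : nat) (alpha : R)
    (s : alloc N K) (p : {ffun alloc N K -> R}) :
  (forall t, is_strategy t -> payoff alpha t s <= payoff alpha s s) ->
  is_mixed p ->
  exp_payoff alpha p (pure R s) <= exp_payoff alpha (pure R s) (pure R s).
Proof.
move=> s_best [p_ge0 [p_supp p_sum1]].
have -> : exp_payoff alpha (pure R s) (pure R s) = \sum_t p t * payoff alpha s s.
  rewrite -mulr_suml p_sum1 mul1r exp_payoff_pure (bigD1 s) //= big1 ?addr0.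
    by rewrite ffunE eqxx mul1r.
  by move=> u /negbTE; rewrite ffunE => ->; rewrite mul0r.
rewrite exp_payoff_pure; apply: ler_sum => t _.
have [St|nSt] := boolP (is_strategy t); first by rewrite ler_wpM2l ?s_best.
by rewrite p_supp // !mul0r.
Qed.

Theorem proposition6 (R : realFieldType) (N K : nat) (alpha : R) :
  (1 <= N)%N -> (2 <= K)%N ->
  2%:R * (K%:R - 1) / K%:R <= alpha ->
  forall s : alloc N K, is_strategy s ->
  nash_eq alpha (pure R s) (pure R s).
Proof.
move=> _ K_ge2 le_alpha s Ss.
have K_gt0 : (0 < K)%N by apply: leq_trans K_ge2.
have s_best t : is_strategy t -> payoff alpha t s <= payoff alpha s s.
  by move=> St; apply: payoff_deviation_le.
have no_deviation p : is_mixed p ->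
    exp_payoff alpha p (pure R s) <= exp_payoff alpha (pure R s) (pure R s).
  exact: pure_best_response.
by split; [|split; [|split]]; try apply: is_mixed_pure.
Qed.
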